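(* Let $n\geq 1$ and $\mathfrak g=sl(n+1,\mathbb C)$. For $(p,q)=(p_1,\dots,p_n,q_1,\dots,q_n)\in\mathbb C^{2n}$ let $$\Psi(p,q)=\begin{pmatrix}-\sum_{j=1}^n p_jq_j & q_1&\cdots&q_n\\ -p_1\sum_{j=1}^n p_jq_j & p_1q_1&\cdots&p_1q_n\\ \vdots&\vdots&&\vdots\\ -p_n\sum_{j=1}^n p_jq_j& p_nq_1&\cdots&p_nq_n\end{pmatrix},$$ and for $X\in\mathfrak g$ let $\tilde X\in\mathbb C[p,q]$ be the polynomial $\tilde X(p,q)=\operatorname{Tr}(\Psi(p,q)X)$. Then: (1) for all $X,Y\in\mathfrak g$, $[\tilde X,\tilde Y]_\ast=\{\tilde X,\tilde Y\}=\widetilde{[X,Y]}$; (2) the map $\rho_0:X\mapsto W(i\tilde X)$ is a representation of $\mathfrak g$ on $\mathcal P$, i.e. $\rho_0$ is linear and $\rho_0([X,Y])=\rho_0(X)\rho_0(Y)-\rho_0(Y)\rho_0(X)$ for all $X,Y\in\mathfrak g$.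
   Context: Write $x=(x_1,\dots,x_{2n})=(p_1,\dots,p_n,q_1,\dots,q_n)$ and let $\Lambda^{ij}$ ($1\le i,j\le 2n$) be given by $\Lambda^{k,n+k}=1$, $\Lambda^{n+k,k}=-1$ for $1\le k\le n$, and $\Lambda^{ij}=0$ otherwise. For polynomials $u,v\in\mathbb C[p,q]$ set $P^0(u,v)=uv$ and for $l\ge1$, $P^l(u,v)=\sum \Lambda^{i_1j_1}\cdots\Lambda^{i_lj_l}\,\partial^l_{x_{i_1}\cdots x_{i_l}}u\;\partial^l_{x_{j_1}\cdots x_{j_l}}v$ (sum over all $i_1,\dots,i_l,j_1,\dots,j_l\in\{1,\dots,2n\}$). The Poisson bracket is $\{u,v\}=P^1(u,v)=\sum_{k=1}^n(\partial_{p_k}u\,\partial_{q_k}v-\partial_{q_k}u\,\partial_{p_k}v)$. The Moyal bracket (at parameter $t=-i/2$) is $[u,v]_\ast=\sum_{l\ge0}\frac{(-1/4)^l}{(2l+1)!}P^{2l+1}(u,v)$. $\mathcal P=\mathbb C[p_1,\dots,p_n]$ is the space of complex polynomials in $p$. The Weyl correspondence $W$ assigns to each polynomial in $(p,q)$ a linear operator on $\mathcal P$, defined by linearity from: for a polynomial $u(p)$ and a multi-index $\alpha\in\mathbb N^n$, $(W(u(p)q^\alpha)\varphi)(p)=\big(i\partial_s\big)^{\alpha}\big(u(p+\tfrac12 s)\varphi(p+s)\big)\big|_{s=0}$, where $s=(s_1,\dots,s_n)$ and $(i\partial_s)^\alpha=\prod_k (i\partial_{s_k})^{\alpha_k}$.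 *)

From HB Require Import structures.
From mathcomp Require Import all_boot all_order all_algebra.
From mathcomp Require Import mpoly.
Set Implicit Arguments. Unset Strict Implicit. Unset Printing Implicit Defensive.
Import Order.TTheory GRing.Theory Num.Theory.
Local Open Scope ring_scope.

Section Defs.
Variables (C : numClosedFieldType) (n : nat).

(* Polynomials in x = (p_1..p_n, q_1..q_n): variable lshift n k is p_(k+1),
   variable rshift n k is q_(k+1). *)
Notation PQ := {mpoly C[n + n]}.
Notation Pn := {mpoly C[n]}.

Definition Lam (i j : 'I_(n + n)) : C :=
  match split i, split j with
  | inl a, inr b => (a == b)%:R
  | inr a, inl b => - (a == b)%:R
  | _, _ => 0
  end.

Definition dpart (l : nat) (I : l.-tuple 'I_(n + n)) (u : PQ) : PQ :=
  foldr (fun i p => mderiv i p) u I.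

Definition Pl (l : nat) (u v : PQ) : PQ :=
  \sum_(I : l.-tuple 'I_(n + n)) \sum_(J : l.-tuple 'I_(n + n))
     (\prod_(k < l) Lam (tnth I k) (tnth J k)) *: (dpart I u * dpart J v).

Definition Poisson (u v : PQ) : PQ := Pl 1 u v.

(* Moyal bracket at t = -i/2: sum_{l>=0} (-1/4)^l/(2l+1)! P^{2l+1}(u,v).
   All terms with 2l+1 > deg u vanish, so the (finite) sum is truncated at
   l < msize u + msize v, which contains every possibly non-zero term. *)
Definition Moyal (u v : PQ) : PQ :=
  \sum_(l < msize u + msize v)
     (((- (4%:R : C)^-1) ^+ l) / ((2 * l + 1)`!)%:R) *: Pl (2 * l + 1) u v.

Definition ppart (m : 'X_{1..n + n}) : 'X_{1..n} :=
  [multinom m (lshift n k) | k < n].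
Definition qpart (m : 'X_{1..n + n}) : 'X_{1..n} :=
  [multinom m (rshift n k) | k < n].

(* Weyl correspondence on a monomial p^a q^alpha, acting on phi, computed in
   the auxiliary ring C[p,s] (variable lshift n k = p_(k+1),
   rshift n k = s_(k+1)):
   (i d_s)^alpha ( (p + s/2)^a phi(p + s) ) |_{s = 0}. *)
Definition WeylMon (m : 'X_{1..n + n}) (phi : Pn) : Pn :=
  let half := [tuple ('X_(lshift n k) + (2%:R : C)^-1 *: 'X_(rshift n k) : PQ)
               | k < n] in
  let full := [tuple ('X_(lshift n k) + 'X_(rshift n k) : PQ) | k < n] in
  let G : PQ := ('X_[ppart m] \mPo half) * (phi \mPo full) in
  let ds : 'X_{1..n + n} :=
    [multinom (match split j with inl _ => 0%N | inr k => qpart m k end)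
     | j < n + n] in
  let D : PQ := ('i ^+ mdeg (qpart m)) *: mderivm ds G in
  let s0 := [tuple (match split j with inl k => 'X_k | inr _ => 0 end : Pn)
             | j < n + n] in
  D \mPo s0.

Definition Weyl (u : PQ) (phi : Pn) : Pn :=
  \sum_(m <- msupp u) u@_m *: WeylMon m phi.

Definition psi_col (i : 'I_n.+1) : PQ :=
  if unlift ord0 i is Some k then 'X_(lshift n k) else 1.
Definition psi_row (j : 'I_n.+1) : PQ :=
  if unlift ord0 j is Some k then 'X_(rshift n k)
  else - \sum_(k < n) 'X_(lshift n k) * 'X_(rshift n k).
Definition Psi : 'M[PQ]_n.+1 := \matrix_(i, j) (psi_col i * psi_row j).

Definition tilde (X : 'M[C]_n.+1) : PQ :=
  \tr (Psi *m map_mx (fun c => c%:MP) X).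

Definition rho0 (X : 'M[C]_n.+1) : Pn -> Pn := Weyl ('i *: tilde X).

End Defs.

(* Write Psi = c r^T with c = (1, p_1, .., p_n) and r = (-Σ p_k q_k, q_1, .., q_n), so
   that X~ = Σ X_ji c_i r_j.  The c_i Poisson-commute, {c_i, r_l} = δ_il - δ_l0 c_i and
   {r_j, r_l} = δ_l0 r_j - δ_j0 r_l; hence {c_i r_j, c_k r_l} = δ_il c_k r_j - δ_kj c_i r_l
   are the commutation relations of matrix units, and {X~, Y~} = [X, Y]~.  Every X~ has
   degree at most one in q, while each term of P^l with l >= 3 differentiates one of its
   arguments at least twice in q, so the Moyal series reduces to its first term.

   The Weyl quantization of a symbol a(p) q_k is i (a ∂_k + ∂_k a / 2), hence
   W(c_i r_j) = i (c_i D_j + δ_ij / 2) with D_k = ∂_k and D_0 = -(Σ p_k ∂_k + (n+1)/2).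
   From [D_j, c_k] = δ_jk - δ_j0 c_k and [D_j, D_l] = δ_j0 D_l - δ_l0 D_j these operators
   again satisfy the matrix-unit relations, and ρ0(X) = -Σ X_ji (c_i D_j + δ_ij / 2). *)

From HB Require Import structures.
From mathcomp Require Import all_boot all_order all_algebra.
From mathcomp Require Import mpoly.
From mathcomp Require Import ring zify.
Set Implicit Arguments. Unset Strict Implicit. Unset Printing Implicit Defensive.
Import Order.TTheory GRing.Theory Num.Theory.
Local Open Scope ring_scope.

Lemma big_tuple1 (T : finType) (V : nmodType) (F : 1.-tuple T -> V) :
  \sum_t F t = \sum_x F [tuple x].
Proof.
rewrite (reindex (fun x : T => [tuple x])) //=.
exists (fun t => thead t) => t _ //=.
by apply: val_inj; case: t => [[|x []]].
Qed.

Lemma split_lshift m n (i : 'I_m) : split (lshift n i) = inl i.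
Proof. exact: (unsplitK (inl _ : 'I_m + 'I_n)). Qed.

Lemma split_rshift m n (i : 'I_n) : split (rshift m i) = inr i.
Proof. exact: (unsplitK (inr _ : 'I_m + 'I_n)). Qed.

Lemma sum_mx_commutator (R : comNzRingType) (V : lmodType R) (N : nat)
    (X Y : 'M[R]_N) (e : 'I_N -> 'I_N -> V) :
  \sum_i \sum_j \sum_k \sum_l (X j i * Y l k) *: (e i l *+ (j == k) - e k j *+ (l == i))
  = \sum_i \sum_j (Y *m X) j i *: e i j - \sum_i \sum_j (X *m Y) j i *: e i j.
Proof.
have YX : \sum_i \sum_j \sum_k \sum_l (X j i * Y l k) *: (e i l *+ (j == k))
         = \sum_i \sum_j (Y *m X) j i *: e i j.
  apply: eq_bigr => i _.
  have -> : \sum_j \sum_k \sum_l (X j i * Y l k) *: (e i l *+ (j == k))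
          = \sum_j \sum_l (X j i * Y l j) *: e i l.
    apply: eq_bigr => j _; rewrite exchange_big /=; apply: eq_bigr => l _.
    rewrite (bigD1 j) //= eqxx mulr1n big1 ?addr0 // => k /negbTE.
    by rewrite eq_sym => ->; rewrite mulr0n scaler0.
  rewrite exchange_big /=; apply: eq_bigr => l _.
  by rewrite mxE scaler_suml; apply: eq_bigr => j _; rewrite mulrC.
have XY : \sum_i \sum_j \sum_k \sum_l (X j i * Y l k) *: (e k j *+ (l == i))
         = \sum_i \sum_j (X *m Y) j i *: e i j.
  have -> : \sum_i \sum_j \sum_k \sum_l (X j i * Y l k) *: (e k j *+ (l == i))
          = \sum_i \sum_j \sum_k (X j i * Y i k) *: e k j.
    apply: eq_bigr => i _; apply: eq_bigr => j _; apply: eq_bigr => k _.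
    rewrite (bigD1 i) //= eqxx mulr1n big1 ?addr0 // => l /negbTE ->.
    by rewrite mulr0n scaler0.
  rewrite exchange_big /=; under eq_bigr do rewrite exchange_big /=.
  rewrite exchange_big /=; apply: eq_bigr => k _; apply: eq_bigr => j _.
  by rewrite mxE scaler_suml.
rewrite -YX -XY -!sumrB; apply: eq_bigr => i _; rewrite -!sumrB.
apply: eq_bigr => j _; rewrite -!sumrB; apply: eq_bigr => k _; rewrite -!sumrB.
by apply: eq_bigr => l _; rewrite scalerBr.
Qed.

Lemma sum_delta (R : pzSemiRingType) (I : finType) (a : I) (F : I -> R) :
  \sum_i (a == i)%:R * F i = F a.
Proof.
rewrite (bigD1 a) //= eqxx mul1r big1 ?addr0 // => i /negbTE.
by rewrite eq_sym => ->; rewrite mul0r.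
Qed.

Lemma exchange_big4 (V : nmodType) (I : finType) (f : I -> I -> I -> I -> V) :
  \sum_i \sum_j \sum_k \sum_l f i j k l = \sum_k \sum_l \sum_i \sum_j f i j k l.
Proof.
under eq_bigr do rewrite exchange_big /=.
under eq_bigr do under eq_bigr do rewrite exchange_big /=.
by rewrite exchange_big /=; under eq_bigr do rewrite exchange_big /=.
Qed.

Section MPolyCalculus.
Variable R : comNzRingType.

Lemma mpoly_ind (k : nat) (P : {mpoly R[k]} -> Prop) :
  (forall c, P c%:MP) -> (forall i, P 'X_i) ->
  (forall p q, P p -> P q -> P (p + q)) ->
  (forall p q, P p -> P q -> P (p * q)) -> forall p, P p.
Proof.
move=> PC PX PD PM p; rewrite (mpolyE p).
apply: (big_ind P); [by rewrite -mpolyC0 | exact: PD | move=> m _].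
rewrite -mul_mpolyC; apply: (PM) => //.
rewrite mpolyXE_id; apply: (big_ind P); [by rewrite -mpolyC1 | exact: PM | move=> i _].
by elim: (m i) => [|e IH]; [rewrite expr0 -mpolyC1 | rewrite exprS; apply: (PM)].
Qed.

Lemma mderivXU (k : nat) (i j : 'I_k) :
  mderiv j ('X_i : {mpoly R[k]}) = (i == j)%:R.
Proof.
rewrite mderivX mnm1E; case: eqP => [->|_]; last by rewrite scale0r.
by rewrite -{1}[U_(j)%MM]add0m addmK mpolyX0 scale1r.
Qed.

Lemma mderiv_comp (k k' : nat) (lq : k.-tuple {mpoly R[k']}) (j : 'I_k') p :
  mderiv j (p \mPo lq) = \sum_(i < k) (mderiv i p \mPo lq) * mderiv j (tnth lq i).
Proof.
elim/mpoly_ind: p => [c|i|p q Dp Dq|p q Dp Dq].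
- rewrite comp_mpolyC mderivC big1 // => i _.
  by rewrite mderivC comp_mpoly0 mul0r.
- rewrite comp_mpolyXU -tnth_nth (bigD1 i) //= big1 => [|i' ne_i'i].
    by rewrite mderivXU eqxx comp_mpoly1 mul1r addr0.
  by rewrite mderivXU eq_sym (negbTE ne_i'i) comp_mpoly0 mul0r.
- rewrite comp_mpolyD mderivD Dp Dq -big_split /=.
  by apply: eq_bigr => i _; rewrite mderivD comp_mpolyD mulrDl.
- rewrite rmorphM /= mderivM Dp Dq mulr_suml mulr_sumr -big_split /=.
  by apply: eq_bigr => i _; rewrite mderivM comp_mpolyD !rmorphM /=; ring.
Qed.

Lemma comp_mpolyA (k k' k'' : nat) (lq : k.-tuple {mpoly R[k']})
    (lr : k'.-tuple {mpoly R[k'']}) p :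
  (p \mPo lq) \mPo lr = p \mPo [tuple tnth lq i \mPo lr | i < k].
Proof.
elim/mpoly_ind: p => [c|i|p q Dp Dq|p q Dp Dq].
- by rewrite !comp_mpolyC.
- by rewrite !comp_mpolyXU -!tnth_nth tnth_mktuple.
- by rewrite !comp_mpolyD Dp Dq.
- by rewrite !rmorphM /= Dp Dq.
Qed.

Lemma mcoeff_foldr_mderiv (k : nat) (s : seq 'I_k) (p : {mpoly R[k]}) m :
  exists c : nat,
    (foldr (fun i q => mderiv i q) p s)@_m = p@_(m + \sum_(i <- s) U_(i))%MM *+ c.
Proof.
elim: s m => [|i s IH] m /=; first by exists 1%N; rewrite big_nil addm0.
rewrite mcoeff_deriv; have [c ->] := IH (m + U_(i))%MM.
by exists (c * (m i).+1)%N; rewrite big_cons addmA mulrnA.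
Qed.

End MPolyCalculus.

Section PhaseSpace.
Variables (C : numClosedFieldType) (n : nat).
Notation c := (@psi_col C n).
Notation r := (@psi_row C n).

Lemma ppartD (m1 m2 : 'X_{1..n + n}) : ppart (m1 + m2)%MM = (ppart m1 + ppart m2)%MM.
Proof. by apply/mnmP => k; rewrite mnmE (mnmDE (lshift n k) m1 m2) (mnmDE k) !mnmE. Qed.

Lemma qpartD (m1 m2 : 'X_{1..n + n}) : qpart (m1 + m2)%MM = (qpart m1 + qpart m2)%MM.
Proof. by apply/mnmP => k; rewrite mnmE (mnmDE (rshift n k) m1 m2) (mnmDE k) !mnmE. Qed.

Lemma ppartUl (a : 'I_n) : ppart U_(lshift n a)%MM = U_(a)%MM.
Proof. by apply/mnmP => k; rewrite mnmE !mnm1E eq_lshift. Qed.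

Lemma ppartUr (a : 'I_n) : ppart U_(rshift n a)%MM = 0%MM.
Proof. by apply/mnmP => k; rewrite mnmE !mnm1E mnm0E eq_sym eq_lrshift. Qed.

Lemma qpartUl (a : 'I_n) : qpart U_(lshift n a)%MM = 0%MM.
Proof. by apply/mnmP => k; rewrite mnmE !mnm1E mnm0E eq_lrshift. Qed.

Lemma qpartUr (a : 'I_n) : qpart U_(rshift n a)%MM = U_(a)%MM.
Proof. by apply/mnmP => k; rewrite mnmE !mnm1E eq_rshift. Qed.

Lemma psi_col_lift (a : 'I_n) : c (lift ord0 a) = 'X_(lshift n a).
Proof. by rewrite /psi_col liftK. Qed.

Lemma psi_col0 : c ord0 = 1.
Proof. by rewrite /psi_col unlift_none. Qed.

Lemma psi_row_lift (a : 'I_n) : r (lift ord0 a) = 'X_(rshift n a).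
Proof. by rewrite /psi_row liftK. Qed.

Lemma psi_row0 : r ord0 = - \sum_(k < n) 'X_(lshift n k) * 'X_(rshift n k).
Proof. by rewrite /psi_row unlift_none. Qed.

Lemma tildeE (X : 'M[C]_n.+1) : tilde X = \sum_i \sum_j X j i *: (c i * r j).
Proof.
rewrite /tilde /mxtrace; apply: eq_bigr => i _; rewrite mxE.
by apply: eq_bigr => j _; rewrite /Psi !mxE mulrC mul_mpolyC.
Qed.

End PhaseSpace.

Section PoissonBracket.
Variables (C : numClosedFieldType) (n : nat).
Notation PQ := {mpoly C[n + n]}.
Notation c := (@psi_col C n).
Notation r := (@psi_row C n).
Implicit Types u v : PQ.

Definition pbracket u v : PQ :=
  \sum_a \sum_b (Lam C a b)%:MP * (mderiv a u * mderiv b v).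

Lemma Poisson_pbracket u v : Poisson u v = pbracket u v.
Proof.
rewrite /Poisson /Pl big_tuple1; apply: eq_bigr => a _; rewrite big_tuple1.
apply: eq_bigr => b _; rewrite big_ord1 /dpart /= -mul_mpolyC.
by rewrite (tnth_nth a) (tnth_nth b).
Qed.

Lemma Lam_lshift_rshift (a b : 'I_n) : Lam C (lshift n a) (rshift n b) = (a == b)%:R.
Proof. by rewrite /Lam split_lshift split_rshift. Qed.

Lemma Lam_rshift_lshift (a b : 'I_n) : Lam C (rshift n a) (lshift n b) = - (a == b)%:R.
Proof. by rewrite /Lam split_lshift split_rshift. Qed.

Lemma Lam_lshift2 (a b : 'I_n) : Lam C (lshift n a) (lshift n b) = 0.
Proof. by rewrite /Lam !split_lshift. Qed.

Lemma Lam_rshift2 (a b : 'I_n) : Lam C (rshift n a) (rshift n b) = 0.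
Proof. by rewrite /Lam !split_rshift. Qed.

Lemma Lam_antisym (a b : 'I_(n + n)) : Lam C b a = - Lam C a b.
Proof.
case: (split_ordP a) => {}a ->; case: (split_ordP b) => {}b ->.
- by rewrite !Lam_lshift2 oppr0.
- by rewrite Lam_rshift_lshift Lam_lshift_rshift eq_sym.
- by rewrite Lam_rshift_lshift Lam_lshift_rshift eq_sym opprK.
- by rewrite !Lam_rshift2 oppr0.
Qed.

Lemma pbracket_antisym u v : pbracket v u = - pbracket u v.
Proof.
rewrite /pbracket exchange_big -sumrN; apply: eq_bigr => a _; rewrite -sumrN.
by apply: eq_bigr => b _; rewrite Lam_antisym rmorphN /=; ring.
Qed.

Lemma pbracketMl u1 u2 v : pbracket (u1 * u2) v = u2 * pbracket u1 v + u1 * pbracket u2 v.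
Proof.
rewrite /pbracket !mulr_sumr -big_split /=; apply: eq_bigr => a _.
rewrite !mulr_sumr -big_split /=; apply: eq_bigr => b _.
by rewrite mderivM; ring.
Qed.

Lemma pbracketMr u v1 v2 : pbracket u (v1 * v2) = v2 * pbracket u v1 + v1 * pbracket u v2.
Proof.
by rewrite pbracket_antisym pbracketMl (pbracket_antisym u v1) (pbracket_antisym u v2); ring.
Qed.

Lemma pbracketZl (a : C) u v : pbracket (a *: u) v = a *: pbracket u v.
Proof.
rewrite /pbracket scaler_sumr; apply: eq_bigr => i _; rewrite scaler_sumr.
by apply: eq_bigr => j _; rewrite mderivZ -!mul_mpolyC; ring.
Qed.

Lemma pbracketZr (a : C) u v : pbracket u (a *: v) = a *: pbracket u v.
Proof. by rewrite pbracket_antisym pbracketZl (pbracket_antisym u v) scalerN opprK. Qed.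

Lemma pbracketNr u v : pbracket u (- v) = - pbracket u v.
Proof. by rewrite -scaleN1r pbracketZr scaleN1r. Qed.

Lemma pbracketCl (a : C) v : pbracket a%:MP v = 0.
Proof.
by rewrite /pbracket big1 // => i _; rewrite big1 // => j _; rewrite mderivC !mul0r mulr0.
Qed.

Lemma pbracket_suml I (s : seq I) (P : pred I) (F : I -> PQ) v :
  pbracket (\sum_(i <- s | P i) F i) v = \sum_(i <- s | P i) pbracket (F i) v.
Proof.
apply: (big_morph (pbracket^~ v)) => [u1 u2|]; last first.
  by rewrite -mpolyC0 pbracketCl.
rewrite /pbracket -big_split /=; apply: eq_bigr => a _; rewrite -big_split /=.
by apply: eq_bigr => b _; rewrite mderivD; ring.
Qed.

Lemma pbracket_sumr I (s : seq I) (P : pred I) (F : I -> PQ) u :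
  pbracket u (\sum_(i <- s | P i) F i) = \sum_(i <- s | P i) pbracket u (F i).
Proof.
rewrite pbracket_antisym pbracket_suml -sumrN.
by apply: eq_bigr => i _; rewrite (pbracket_antisym u) opprK.
Qed.

Lemma pbracketXX (x y : 'I_(n + n)) : pbracket 'X_x 'X_y = (Lam C x y)%:MP.
Proof.
rewrite /pbracket (bigD1 x) //= [X in _ + X]big1 ?addr0 => [|a ne_ax]; last first.
  by rewrite big1 // => b _; rewrite mderivXU eq_sym (negbTE ne_ax) mul0r mulr0.
rewrite (bigD1 y) //= [X in _ + X]big1 ?addr0 => [|b ne_by]; last first.
  by rewrite !mderivXU eq_sym (negbTE ne_by) !mulr0.
by rewrite !mderivXU !eqxx !mulr1.
Qed.

Lemma pbracket_self u : pbracket u u = 0.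
Proof.
have twice : pbracket u u *+ 2 = 0 by rewrite mulr2n {1}pbracket_antisym addNr.
have nz2 : (2%:R : C) != 0 by rewrite pnatr_eq0.
by rewrite -[LHS]scale1r -(mulVf nz2) -scalerA scaler_nat twice scaler0.
Qed.

Lemma pbracket_psi_col (i k : 'I_n.+1) : pbracket (c i) (c k) = 0.
Proof.
case: (unliftP ord0 i) => [a ->|->]; last by rewrite psi_col0 -mpolyC1 pbracketCl.
case: (unliftP ord0 k) => [b ->|->].
  by rewrite !psi_col_lift pbracketXX Lam_lshift2 mpolyC0.
by rewrite psi_col0 pbracket_antisym -mpolyC1 pbracketCl oppr0.
Qed.

Lemma pbracket_lshift_psi_row0 (a : 'I_n) :
  pbracket 'X_(lshift n a) (r ord0) = - 'X_(lshift n a).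
Proof.
rewrite psi_row0 pbracketNr pbracket_sumr; congr (- _).
apply: etrans (sum_delta a (fun k => 'X_(lshift n k))); apply: eq_bigr => k _.
by rewrite pbracketMr !pbracketXX Lam_lshift2 Lam_lshift_rshift mpolyC0 mpolyC_nat; ring.
Qed.

Lemma pbracket_rshift_psi_row0 (a : 'I_n) :
  pbracket 'X_(rshift n a) (r ord0) = 'X_(rshift n a).
Proof.
rewrite psi_row0 pbracketNr pbracket_sumr -sumrN.
apply: etrans (sum_delta a (fun k => 'X_(rshift n k))); apply: eq_bigr => k _.
rewrite pbracketMr !pbracketXX Lam_rshift2 Lam_rshift_lshift.
by rewrite mpolyC0 rmorphN /= mpolyC_nat; ring.
Qed.

Lemma pbracket_psi_col_row (i l : 'I_n.+1) :
  pbracket (c i) (r l) = (i == l)%:R - (l == ord0)%:R * c i.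
Proof.
case: (unliftP ord0 i) => [a ->|->]; last first.
  by rewrite psi_col0 -mpolyC1 pbracketCl eq_sym mulr1 subrr.
case: (unliftP ord0 l) => [b ->|->].
  rewrite psi_col_lift psi_row_lift pbracketXX Lam_lshift_rshift (inj_eq lift_inj).
  by rewrite lift_eqF mpolyC_nat mul0r subr0.
by rewrite psi_col_lift pbracket_lshift_psi_row0 lift_eqF eqxx mul1r sub0r.
Qed.

Lemma pbracket_psi_row (j l : 'I_n.+1) :
  pbracket (r j) (r l) = (l == ord0)%:R * r j - (j == ord0)%:R * r l.
Proof.
case: (unliftP ord0 j) => [a ->|->]; case: (unliftP ord0 l) => [b ->|->].
- by rewrite !psi_row_lift pbracketXX Lam_rshift2 mpolyC0 !lift_eqF !mul0r subrr.
- by rewrite psi_row_lift pbracket_rshift_psi_row0 lift_eqF eqxx mul1r mul0r subr0.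
- rewrite psi_row_lift pbracket_antisym pbracket_rshift_psi_row0.
  by rewrite lift_eqF eqxx mul1r mul0r sub0r.
- by rewrite pbracket_self eqxx subrr.
Qed.

Lemma pbracket_psi (i j k l : 'I_n.+1) :
  pbracket (c i * r j) (c k * r l) = c k * r j *+ (i == l) - c i * r l *+ (k == j).
Proof.
rewrite pbracketMl (pbracketMr (c i)) (pbracketMr (r j)).
rewrite (pbracket_antisym (c k) (r j)) pbracket_psi_col !pbracket_psi_col_row pbracket_psi_row.
by rewrite -(mulr_natl _ (i == l)) -(mulr_natl _ (k == j)); ring.
Qed.

Lemma pbracket_tilde (X Y : 'M[C]_n.+1) :
  pbracket (tilde X) (tilde Y) = tilde (X *m Y - Y *m X).
Proof.
have -> : pbracket (tilde X) (tilde Y) = - \sum_i \sum_j \sum_k \sum_l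
    (X j i * Y l k) *: (c i * r l *+ (j == k) - c k * r j *+ (l == i)).
  rewrite !tildeE pbracket_suml -sumrN; apply: eq_bigr => i _.
  rewrite pbracket_suml -sumrN; apply: eq_bigr => j _.
  rewrite pbracketZl pbracket_sumr scaler_sumr -sumrN; apply: eq_bigr => k _.
  rewrite pbracket_sumr scaler_sumr -sumrN; apply: eq_bigr => l _.
  by rewrite pbracketZr pbracket_psi scalerA -scalerN opprB (eq_sym i l) (eq_sym k j).
rewrite sum_mx_commutator opprB tildeE -sumrB; apply: eq_bigr => i _.
by rewrite -sumrB; apply: eq_bigr => j _; rewrite !mxE scalerBl.
Qed.

End PoissonBracket.

Section MoyalTruncation.
Variables (C : numClosedFieldType) (n : nat).
Notation PQ := {mpoly C[n + n]}.
Implicit Types (u v : PQ) (m : 'X_{1..n + n}).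

Definition qvar (i : 'I_(n + n)) : bool := (n <= i)%N.

Definition qdeg m : nat := mdeg (qpart m).

Definition qdeg_le (d : nat) u := forall m, m \in msupp u -> (qdeg m <= d)%N.

Lemma qvar_lshift (a : 'I_n) : qvar (lshift n a) = false.
Proof. by rewrite /qvar /= leqNgt ltn_ord. Qed.

Lemma qvar_rshift (b : 'I_n) : qvar (rshift n b).
Proof. exact: leq_addr. Qed.

Lemma qdeg0 : qdeg 0%MM = 0%N.
Proof.
rewrite /qdeg (_ : qpart 0 = 0)%MM ?mdeg0 //.
by apply/mnmP => k; rewrite mnmE !mnm0E.
Qed.

Lemma qdegD m1 m2 : qdeg (m1 + m2)%MM = (qdeg m1 + qdeg m2)%N.
Proof. by rewrite /qdeg qpartD mdegD. Qed.

Lemma qdegU (i : 'I_(n + n)) : qdeg U_(i)%MM = qvar i.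
Proof.
rewrite /qdeg; case: (split_ordP i) => a ->.
  by rewrite qpartUl mdeg0 qvar_lshift.
by rewrite qpartUr mdeg1 qvar_rshift.
Qed.

Lemma qdeg_sumU (s : seq 'I_(n + n)) : qdeg (\sum_(i <- s) U_(i))%MM = count qvar s.
Proof.
elim: s => [|i s IH]; first by rewrite big_nil qdeg0.
by rewrite big_cons qdegD qdegU IH.
Qed.

Lemma foldr_mderiv_eq0 (d : nat) u (s : seq 'I_(n + n)) :
  qdeg_le d u -> (d < count qvar s)%N -> foldr (fun i q => mderiv i q) u s = 0.
Proof.
move=> du lt_ds; apply/mpolyP => m; have [k ->] := mcoeff_foldr_mderiv s u m.
rewrite mcoeff0 memN_msupp_eq0 ?mul0rn //; apply/negP => /du.
by rewrite qdegD qdeg_sumU => /(leq_trans (leq_addl _ _)); rewrite leqNgt lt_ds.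
Qed.

Lemma qdeg_le0 d : qdeg_le d 0.
Proof. by move=> m; rewrite msupp0. Qed.

Lemma qdeg_leD d u v : qdeg_le d u -> qdeg_le d v -> qdeg_le d (u + v).
Proof. by move=> du dv m /msuppD_le; rewrite mem_cat => /orP[/du|/dv]. Qed.

Lemma qdeg_leZ d (a : C) u : qdeg_le d u -> qdeg_le d (a *: u).
Proof. by move=> du m /msuppZ_le /du. Qed.

Lemma qdeg_le_sum d I (s : seq I) (P : pred I) (F : I -> PQ) :
  (forall i, P i -> qdeg_le d (F i)) -> qdeg_le d (\sum_(i <- s | P i) F i).
Proof. by move=> dF; elim/big_ind: _ => //; [exact: qdeg_le0 | exact: qdeg_leD]. Qed.

Lemma qdeg_leM d1 d2 u v :
  qdeg_le d1 u -> qdeg_le d2 v -> qdeg_le (d1 + d2) (u * v).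
Proof.
move=> du dv m /msuppM_le /allpairsP[[m1 m2] /= [/du le1 /dv le2 ->]].
by rewrite qdegD leq_add.
Qed.

Lemma qdeg_leX d m : (qdeg m <= d)%N -> qdeg_le d 'X_[m].
Proof. by move=> le_md m'; rewrite msuppX inE => /eqP ->. Qed.

Lemma qdeg_le_tilde (X : 'M[C]_n.+1) : qdeg_le 1 (tilde X).
Proof.
have col i : qdeg_le 0 (@psi_col C n i).
  case: (unliftP ord0 i) => [a ->|->]; rewrite ?psi_col0 -?mpolyX0 ?psi_col_lift.
    by apply: qdeg_leX; rewrite qdegU qvar_lshift.
  by apply: qdeg_leX; rewrite qdeg0.
have row j : qdeg_le 1 (@psi_row C n j).
  case: (unliftP ord0 j) => [b ->|->].
    by rewrite psi_row_lift; apply: qdeg_leX; rewrite qdegU leq_b1.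
  rewrite psi_row0 -scaleN1r; apply/qdeg_leZ/qdeg_le_sum => k _.
  by apply: (qdeg_leM (d1 := 0)); apply: qdeg_leX; rewrite qdegU ?qvar_lshift ?leq_b1.
rewrite tildeE; apply: qdeg_le_sum => i _; apply: qdeg_le_sum => j _.
exact/qdeg_leZ/(qdeg_leM (col i) (row j)).
Qed.

Lemma Lam_qvar (x y : 'I_(n + n)) : Lam C x y != 0 -> qvar x = ~~ qvar y.
Proof.
case: (split_ordP x) => a ->; case: (split_ordP y) => b ->;
  by rewrite ?Lam_lshift2 ?Lam_rshift2 ?eqxx // ?qvar_lshift ?qvar_rshift.
Qed.

Lemma Pl_qdeg_le1 l u v : qdeg_le 1 u -> qdeg_le 1 v -> (2 < l)%N -> Pl l u v = 0.
Proof.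
move=> du dv lt2l; rewrite /Pl big1 // => I _; rewrite big1 // => J _.
case: (boolP [exists k, Lam C (tnth I k) (tnth J k) == 0]).
  by case/existsP=> k /eqP Lam0; rewrite (bigD1 k) //= Lam0 mul0r scale0r.
move=> /existsPn LamNZ.
have count_IJ : (count qvar I + count qvar J)%N = l.
  rewrite -!sum1_count !big_tuple big_mkcond [X in (_ + X)%N]big_mkcond -big_split /=.
  rewrite -[RHS]card_ord -sum1_card.
  by apply: eq_bigr => k _; rewrite (Lam_qvar (LamNZ k)); case: qvar.
have [lt1I|leI1] := ltnP 1 (count qvar I).
  by rewrite /dpart (foldr_mderiv_eq0 du lt1I) mul0r scaler0.
have lt1J : (1 < count qvar J)%N by lia.
by rewrite /dpart (foldr_mderiv_eq0 dv lt1J) mulr0 scaler0.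
Qed.

Lemma Moyal_Poisson u v : qdeg_le 1 u -> qdeg_le 1 v -> Moyal u v = Poisson u v.
Proof.
move=> du dv; rewrite /Moyal.
case E: (msize u + msize v)%N => [|N].
  have /eqP : msize u = 0%N by lia.
  by rewrite msize_poly_eq0 => /eqP ->; rewrite big_ord0 Poisson_pbracket -mpolyC0 pbracketCl.
rewrite big_ord_recl big1 ?addr0 => [|i _]; last by rewrite Pl_qdeg_le1 ?scaler0 // lift0; lia.
by rewrite expr0 div1r /= invr1 scale1r.
Qed.

End MoyalTruncation.

Section WeylQuantization.
Variables (C : numClosedFieldType) (n : nat).
Notation PQ := {mpoly C[n + n]}.
Notation Pn := {mpoly C[n]}.
Implicit Types (u v : PQ) (phi : Pn).

Lemma Weyl_seq u phi (s : seq 'X_{1..n + n}) :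
  uniq s -> {subset msupp u <= s} -> Weyl u phi = \sum_(m <- s) u@_m *: WeylMon m phi.
Proof.
move=> uniq_s supp_s; rewrite /Weyl [RHS](bigID (mem (msupp u))) /=.
rewrite [X in _ + X]big1 ?addr0 => [|m /memN_msupp_eq0 ->]; last by rewrite scale0r.
rewrite -[RHS]big_filter; apply: perm_big.
apply: uniq_perm; [exact: msupp_uniq | exact: filter_uniq |].
by move=> m; rewrite mem_filter; case: (boolP (m \in msupp u)) => //= /supp_s ->.
Qed.

Lemma Weyl_linear (a : C) u v phi : Weyl (a *: u + v) phi = a *: Weyl u phi + Weyl v phi.
Proof.
set s := undup (msupp u ++ msupp v); have uniq_s : uniq s := undup_uniq _.
have su : {subset msupp u <= s} by move=> m mu; rewrite mem_undup mem_cat mu.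
have sv : {subset msupp v <= s} by move=> m mv; rewrite mem_undup mem_cat mv orbT.
have suv : {subset msupp (a *: u + v) <= s}.
  by move=> m /msuppD_le; rewrite mem_cat => /orP[/msuppZ_le/su|/sv].
rewrite (Weyl_seq _ uniq_s su) (Weyl_seq _ uniq_s sv) (Weyl_seq _ uniq_s suv).
rewrite scaler_sumr -big_split /=; apply: eq_bigr => m _.
by rewrite mcoeffD mcoeffZ scalerDl scalerA.
Qed.

Lemma Weyl0 phi : Weyl 0 phi = 0.
Proof. by rewrite /Weyl msupp0 big_nil. Qed.

Lemma WeylD u v phi : Weyl (u + v) phi = Weyl u phi + Weyl v phi.
Proof. by have := Weyl_linear 1 u v phi; rewrite !scale1r. Qed.

Lemma WeylZ (a : C) u phi : Weyl (a *: u) phi = a *: Weyl u phi.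
Proof. by have := Weyl_linear a u 0 phi; rewrite !addr0 Weyl0 addr0. Qed.

Lemma WeylN u phi : Weyl (- u) phi = - Weyl u phi.
Proof. by rewrite -scaleN1r WeylZ scaleN1r. Qed.

Lemma Weyl_sum I (s : seq I) (P : pred I) (F : I -> PQ) phi :
  Weyl (\sum_(i <- s | P i) F i) phi = \sum_(i <- s | P i) Weyl (F i) phi.
Proof. by apply: (big_morph (fun u => Weyl u phi)) => [u v|]; rewrite ?WeylD ?Weyl0. Qed.

Lemma WeylX m phi : Weyl 'X_[m] phi = WeylMon m phi.
Proof. by rewrite /Weyl msuppX big_seq1 mcoeffX eqxx scale1r. Qed.

(* The substitutions p := p + a s (a = 1/2 and a = 1) and s := 0 performed by [WeylMon]. *)
Definition shift_by (a : C) : n.-tuple PQ :=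
  [tuple 'X_(lshift n k) + a *: 'X_(rshift n k) | k < n].

Definition at_s0 : (n + n).-tuple Pn :=
  [tuple (match split j with inl k => 'X_k | inr _ => 0 end : Pn) | j < n + n].

Lemma comp_shift_by_s0 (a : C) phi : (phi \mPo shift_by a) \mPo at_s0 = phi.
Proof.
rewrite comp_mpolyA -[RHS]comp_mpoly_id; congr (_ \mPo _).
apply: eq_from_tnth => i; rewrite !tnth_mktuple comp_mpolyD comp_mpolyZ !comp_mpolyXU.
by rewrite -!tnth_nth !tnth_mktuple split_lshift split_rshift scaler0 addr0.
Qed.

Lemma mderiv_shift_by (a : C) phi (k : 'I_n) :
  mderiv (rshift n k) (phi \mPo shift_by a) = a *: (mderiv k phi \mPo shift_by a).
Proof.
rewrite mderiv_comp (bigD1 k) //= big1 => [|i /negbTE ne_ik].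
  rewrite tnth_mktuple mderivD mderivZ !mderivXU eq_lrshift eqxx add0r addr0.
  by rewrite -scalerAr mulr1.
rewrite tnth_mktuple mderivD mderivZ !mderivXU eq_lrshift eq_rshift ne_ik.
by rewrite scaler0 addr0 mulr0.
Qed.

Lemma WeylMon_qU m (k : 'I_n) phi : qpart m = U_(k)%MM ->
  WeylMon m phi = 'i *: ((2%:R : C)^-1 *: (mderiv k 'X_[ppart m] * phi)
                         + 'X_[ppart m] * mderiv k phi).
Proof.
move=> qmk; rewrite /WeylMon -/(shift_by _) -/at_s0 qmk mdeg1 expr1.
have -> : [tuple ('X_(lshift n j) + 'X_(rshift n j) : PQ) | j < n] = shift_by 1.
  by apply: eq_from_tnth => j; rewrite !tnth_mktuple scale1r.
have -> : [multinom (match split j with inl _ => 0%N | inr l => U_(k)%MM l end)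
          | j < n + n] = U_(rshift n k)%MM.
  apply/mnmP => j; rewrite mnmE mnm1E; case: (split_ordP j) => l ->.
    by rewrite eq_sym eq_lrshift.
  by rewrite mnm1E eq_rshift.
rewrite mderivmU1m mderivM !mderiv_shift_by scale1r comp_mpolyZ comp_mpolyD !rmorphM /=.
by rewrite !comp_mpolyZ !comp_shift_by_s0 -scalerAl.
Qed.

End WeylQuantization.

Section WeylRepresentation.
Variables (C : numClosedFieldType) (n : nat).
Notation Pn := {mpoly C[n]}.
Notation half := ((2%:R : C)^-1).
Implicit Types (X Y : 'M[C]_n.+1) (phi psi : Pn).

Definition pcol (i : 'I_n.+1) : Pn := if unlift ord0 i is Some a then 'X_a else 1.

Definition euler phi : Pn := \sum_k 'X_k * mderiv k phi.

Definition Dop (j : 'I_n.+1) phi : Pn :=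
  if unlift ord0 j is Some b then mderiv b phi
  else - (euler phi + (n.+1%:R * half)%:MP * phi).

Definition Wop (i j : 'I_n.+1) phi : Pn :=
  pcol i * Dop j phi + ((i == j)%:R * half)%:MP * phi.

Lemma Weyl_pq (a b : 'I_n) phi :
  Weyl ('X_(lshift n a) * 'X_(rshift n b)) phi =
  'i *: ('X_a * mderiv b phi + ((a == b)%:R * half)%:MP * phi).
Proof.
rewrite -mpolyXD WeylX (WeylMon_qU (k := b)); last by rewrite qpartD qpartUl qpartUr add0m.
rewrite ppartD ppartUl ppartUr addm0 mderivXU -!mul_mpolyC.
by rewrite !rmorphM /= !mpolyC_nat; ring.
Qed.

Lemma Weyl_q (b : 'I_n) phi : Weyl 'X_(rshift n b) phi = 'i *: mderiv b phi.
Proof.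
rewrite WeylX (WeylMon_qU (k := b)); last by rewrite qpartUr.
by rewrite ppartUr mpolyX0 -mpolyC1 mderivC mul0r scaler0 add0r mpolyC1 mul1r.
Qed.

Lemma Weyl_euler phi :
  Weyl (\sum_k 'X_(lshift n k) * 'X_(rshift n k)) phi =
  'i *: (euler phi + (n%:R * half)%:MP * phi).
Proof.
rewrite Weyl_sum; under eq_bigr do rewrite Weyl_pq eqxx.
rewrite -scaler_sumr big_split /= sumr_const card_ord -mulr_natl.
by rewrite /euler !rmorphM /= !mpolyC_nat; congr (_ *: _); ring.
Qed.

Lemma Weyl_p_euler (a : 'I_n) phi :
  Weyl ('X_(lshift n a) * \sum_k 'X_(lshift n k) * 'X_(rshift n k)) phi =
  'i *: ('X_a * euler phi + (n.+1%:R * half)%:MP * ('X_a * phi)).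
Proof.
have Weyl_ppq k : Weyl ('X_(lshift n a) * ('X_(lshift n k) * 'X_(rshift n k))) phi =
    'i *: (half%:MP * ((a == k)%:R * 'X_k + 'X_a) * phi + 'X_a * ('X_k * mderiv k phi)).
  rewrite mulrA -!mpolyXD WeylX (WeylMon_qU (k := k)); last first.
    by rewrite !qpartD !qpartUl !qpartUr !add0m.
  rewrite !ppartD !ppartUl ppartUr addm0 mpolyXD mderivM !mderivXU eqxx.
  by congr (_ *: _); rewrite -!mul_mpolyC /= mulr1; ring.
rewrite mulr_sumr Weyl_sum (eq_bigr _ (fun k _ => Weyl_ppq k)) -scaler_sumr.
rewrite big_split /= -mulr_suml -mulr_sumr big_split /= sum_delta -mulr_sumr -/(euler phi).
rewrite sumr_const card_ord -mulr_natl !rmorphM /= !mpolyC_nat.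
by congr (_ *: _); ring.
Qed.

Lemma Weyl_psi (i j : 'I_n.+1) phi :
  Weyl (@psi_col C n i * psi_row C j) phi = 'i *: Wop i j phi.
Proof.
rewrite /Wop /pcol /Dop.
case: (unliftP ord0 i) => [a ->|->]; case: (unliftP ord0 j) => [b ->|->].
- by rewrite psi_col_lift psi_row_lift Weyl_pq (inj_eq lift_inj).
- rewrite psi_col_lift psi_row0 mulrN WeylN Weyl_p_euler lift_eqF -scalerN.
  by congr (_ *: _); rewrite mul0r mpolyC0; ring.
- rewrite psi_col0 psi_row_lift mul1r Weyl_q eq_liftF.
  by congr (_ *: _); rewrite mul0r mpolyC0; ring.
- rewrite psi_col0 psi_row0 mul1r WeylN Weyl_euler eqxx -scalerN.
  by congr (_ *: _); rewrite !rmorphM /= !mpolyC_nat /=; ring.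
Qed.

Lemma rho0E (X : 'M[C]_n.+1) phi : rho0 X phi = - \sum_i \sum_j X j i *: Wop i j phi.
Proof.
rewrite /rho0 tildeE WeylZ Weyl_sum -sumrN scaler_sumr; apply: eq_bigr => i _.
rewrite Weyl_sum -sumrN scaler_sumr; apply: eq_bigr => j _.
rewrite WeylZ Weyl_psi !scalerA -scaleNr; congr (_ *: _).
by rewrite mulrC mulrA -expr2 sqrCi mulN1r.
Qed.

Lemma euler_linear (a : C) phi psi :
  euler (a%:MP * phi + psi) = a%:MP * euler phi + euler psi.
Proof.
rewrite /euler mulr_sumr -big_split /=; apply: eq_bigr => k _.
by rewrite mderivD mderiv_mulC; ring.
Qed.

Lemma euler_mulX (a : 'I_n) phi : euler ('X_a * phi) = 'X_a * euler phi + 'X_a * phi.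
Proof.
rewrite /euler mulr_sumr -[X in _ + X](sum_delta a (fun k => 'X_k * phi)) -big_split /=.
by apply: eq_bigr => k _; rewrite mderivM mderivXU; ring.
Qed.

Lemma mderiv_euler (b : 'I_n) phi :
  mderiv b (euler phi) = euler (mderiv b phi) + mderiv b phi.
Proof.
rewrite /euler raddf_sum /= -[X in _ + X](sum_delta b (fun k => mderiv k phi)) -big_split /=.
by apply: eq_bigr => k _; rewrite mderivM mderivXU mderiv_comm eq_sym; ring.
Qed.

Lemma Dop_linear j (a : C) phi psi :
  Dop j (a%:MP * phi + psi) = a%:MP * Dop j phi + Dop j psi.
Proof.
rewrite /Dop; case: (unlift ord0 j) => [b|]; first by rewrite mderivD mderiv_mulC.
by rewrite euler_linear; ring.
Qed.

Lemma DopD j phi psi : Dop j (phi + psi) = Dop j phi + Dop j psi.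
Proof. by have := Dop_linear j 1 phi psi; rewrite mpolyC1 !mul1r. Qed.

Lemma Dop0 j : Dop j 0 = 0.
Proof. by apply/(addrI (Dop j 0)); rewrite -DopD !addr0. Qed.

Lemma Dop_mulC j (a : C) phi : Dop j (a%:MP * phi) = a%:MP * Dop j phi.
Proof. by have := Dop_linear j a phi 0; rewrite !addr0 Dop0 addr0. Qed.

Lemma Dop_mul_pcol j k phi :
  Dop j (pcol k * phi) = pcol k * Dop j phi + ((j == k)%:R - (j == ord0)%:R * pcol k) * phi.
Proof.
rewrite /Dop /pcol.
case: (unliftP ord0 j) => [b ->|->]; case: (unliftP ord0 k) => [a ->|->].
- by rewrite (inj_eq lift_inj) mderivM mderivXU lift_eqF eq_sym mul0r subr0; ring.
- by rewrite lift_eqF !mul1r mul0r subrr mul0r addr0.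
- by rewrite eq_liftF eqxx euler_mulX /=; ring.
- by rewrite eqxx !mul1r subrr mul0r addr0.
Qed.

Lemma Dop_comm j l phi :
  Dop j (Dop l phi) =
  Dop l (Dop j phi) + (j == ord0)%:R * Dop l phi - (l == ord0)%:R * Dop j phi.
Proof.
have Dop_lift b psi : Dop (lift ord0 b) psi = mderiv b psi by rewrite /Dop liftK.
have mderiv_Dop0 b : mderiv b (Dop ord0 phi) = Dop ord0 (mderiv b phi) - mderiv b phi.
  by rewrite /Dop unlift_none mderivN mderivD mderiv_euler mderiv_mulC; ring.
case: (unliftP ord0 j) => [b ->|->]; case: (unliftP ord0 l) => [a ->|->].
- by rewrite !Dop_lift mderiv_comm !lift_eqF !mul0r !subr0 addr0.
- by rewrite !Dop_lift mderiv_Dop0 lift_eqF eqxx mul0r mul1r addr0.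
- by rewrite !Dop_lift mderiv_Dop0 lift_eqF eqxx mul0r mul1r subr0 subrK.
- by rewrite eqxx addrK.
Qed.

Lemma Wop_commutator i j k l phi :
  Wop i j (Wop k l phi) - Wop k l (Wop i j phi) =
  Wop i l phi *+ (j == k) - Wop k j phi *+ (l == i).
Proof.
rewrite /Wop (DopD j (pcol k * Dop l phi)) (DopD l (pcol i * Dop j phi)).
rewrite (Dop_mulC j _ phi) (Dop_mulC l _ phi) (Dop_mul_pcol j k) (Dop_mul_pcol l i).
rewrite (Dop_comm j l phi) -(mulr_natl _ (j == k)) -(mulr_natl _ (l == i)).
by rewrite !rmorphM /= !mpolyC_nat (eq_sym i l) (eq_sym k j); ring.
Qed.

Lemma Wop_linear i j (a : C) phi psi :
  Wop i j (a *: phi + psi) = a *: Wop i j phi + Wop i j psi.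
Proof. by rewrite /Wop -!mul_mpolyC Dop_linear; ring. Qed.

Lemma Wop0 i j : Wop i j 0 = 0.
Proof. by rewrite /Wop Dop0 !mulr0 addr0. Qed.

Lemma WopZ i j (a : C) phi : Wop i j (a *: phi) = a *: Wop i j phi.
Proof. by have := Wop_linear i j a phi 0; rewrite !addr0 Wop0 addr0. Qed.

Lemma WopN i j phi : Wop i j (- phi) = - Wop i j phi.
Proof. by rewrite -scaleN1r WopZ scaleN1r. Qed.

Lemma Wop_sum i j I (s : seq I) (P : pred I) (F : I -> Pn) :
  Wop i j (\sum_(t <- s | P t) F t) = \sum_(t <- s | P t) Wop i j (F t).
Proof.
apply: (big_morph (Wop i j)) => [phi psi|]; last exact: Wop0.
by have := Wop_linear i j 1 phi psi; rewrite !scale1r.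
Qed.

Lemma rho0_comp X Y phi :
  rho0 X (rho0 Y phi) =
  \sum_i \sum_j \sum_k \sum_l (X j i * Y l k) *: Wop i j (Wop k l phi).
Proof.
rewrite (rho0E X) -sumrN; apply: eq_bigr => i _; rewrite -sumrN; apply: eq_bigr => j _.
rewrite rho0E WopN scalerN opprK Wop_sum scaler_sumr.
apply: eq_bigr => k _; rewrite Wop_sum scaler_sumr; apply: eq_bigr => l _.
by rewrite WopZ scalerA.
Qed.

Lemma rho0_bracket X Y phi :
  rho0 (X *m Y - Y *m X) phi = rho0 X (rho0 Y phi) - rho0 Y (rho0 X phi).
Proof.
rewrite (rho0_comp X Y) (rho0_comp Y X).
rewrite (exchange_big4 (fun i j k l => (Y j i * X l k) *: Wop i j (Wop k l phi))) -!sumrB.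
under eq_bigr do rewrite -sumrB; under eq_bigr do under eq_bigr do rewrite -sumrB.
under eq_bigr do under eq_bigr do under eq_bigr do rewrite -sumrB.
under eq_bigr do under eq_bigr do under eq_bigr do under eq_bigr do
  rewrite [Y _ _ * _]mulrC -scalerBr Wop_commutator.
rewrite sum_mx_commutator rho0E -sumrB -sumrN; apply: eq_bigr => i _.
by rewrite -sumrB -sumrN; apply: eq_bigr => j _; rewrite !mxE scalerBl opprB.
Qed.

Lemma rho0_linear X (a : C) phi psi : rho0 X (a *: phi + psi) = a *: rho0 X phi + rho0 X psi.
Proof.
rewrite !rho0E scalerN -opprD scaler_sumr -big_split /=; congr (- _).
apply: eq_bigr => i _; rewrite scaler_sumr -big_split /=; apply: eq_bigr => j _.
by rewrite Wop_linear scalerDr !scalerA mulrC.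
Qed.

Lemma rho0_linearX X Y (a b : C) phi :
  rho0 (a *: X + b *: Y) phi = a *: rho0 X phi + b *: rho0 Y phi.
Proof.
rewrite !rho0E !scalerN -opprD !scaler_sumr -big_split /=; congr (- _).
apply: eq_bigr => i _; rewrite !scaler_sumr -big_split /=; apply: eq_bigr => j _.
by rewrite !mxE scalerDl !scalerA.
Qed.

End WeylRepresentation.

Theorem proposition6p1 (C : numClosedFieldType) (n : nat) (hn : (1 <= n)%N) :
  (* (1) *)
  (forall X Y : 'M[C]_n.+1, \tr X = 0 -> \tr Y = 0 ->
     Moyal (tilde X) (tilde Y) = Poisson (tilde X) (tilde Y) /\
     Poisson (tilde X) (tilde Y) = tilde (X *m Y - Y *m X)) /\
  (* (2) each rho_0(X) is a linear operator on P *)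
  (forall (X : 'M[C]_n.+1) (a : C) (phi psi : {mpoly C[n]}), \tr X = 0 ->
     rho0 X (a *: phi + psi) = a *: rho0 X phi + rho0 X psi) /\
  (* rho_0 is linear in X *)
  (forall (X Y : 'M[C]_n.+1) (a b : C) (phi : {mpoly C[n]}),
     \tr X = 0 -> \tr Y = 0 ->
     rho0 (a *: X + b *: Y) phi = a *: rho0 X phi + b *: rho0 Y phi) /\
  (* rho_0 preserves brackets *)
  (forall (X Y : 'M[C]_n.+1) (phi : {mpoly C[n]}), \tr X = 0 -> \tr Y = 0 ->
     rho0 (X *m Y - Y *m X) phi = rho0 X (rho0 Y phi) - rho0 Y (rho0 X phi)).
Proof.
split=> [X Y _ _|].
  split; last by rewrite Poisson_pbracket pbracket_tilde.
  by apply: Moyal_Poisson; apply: qdeg_le_tilde.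
split=> [X a phi psi _|]; first exact: rho0_linear.
split=> [X Y a b phi _ _|X Y phi _ _]; first exact: rho0_linearX.
exact: rho0_bracket.
Qed.
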